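(* Let $f=a_0+a_1 z+\cdots+a_mz^m\in \mathbb{Z}[z]$ be primitive (the greatest common divisor of its coefficients is $1$). Suppose there exist positive real numbers $\alpha<\beta$ and an index $j\in\{0,1,\ldots,m\}$ such that \[ |a_j|\alpha^j >\left(\frac{\beta}{\alpha}\right)^{m-j}\sum_{i=0,\, i\neq j}^m |a_i|\alpha^i. \] Further, suppose there exist natural numbers $n$, $d$, $k$, $\ell\leq m$, and a prime $p$ with $p\nmid d$ such that $\beta-d\geq n\geq \alpha+d$, $f(n)=\pm p^k d$, $\gcd(k,\ell)=1$, $p^k$ divides $\frac{f^{(i)}(n)}{i!}$ for each $i=0, 1, \ldots,\ell-1$, and, in case $k>1$, also $p\nmid \frac{f^{(\ell)}(n)}{\ell!}$. Then $f$ is irreducible in $\mathbb{Z}[z]$.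
   Context: $f^{(i)}$ denotes the $i$-th derivative of $f$ with respect to $z$. Natural numbers are positive integers. *)

From HB Require Import structures.
From mathcomp Require Import all_boot all_order all_algebra.
Set Implicit Arguments. Unset Strict Implicit. Unset Printing Implicit Defensive.
Import Order.TTheory GRing.Theory Num.Theory.
Local Open Scope ring_scope.

Definition primitive_int (f : {poly int}) : Prop :=
  (\big[gcdn/0%N]_(i < size f) absz (f`_i)%R)%N = 1%N.

Definition irreducible_Zpoly (f : {poly int}) : Prop :=
  [/\ f != 0, f \isn't a GRing.unit &
      forall g h : {poly int}, f = g * h -> g \is a GRing.unit \/ h \is a GRing.unit].

From HB Require Import structures.
From mathcomp Require Import all_boot all_order all_algebra all_field.
From mathcomp Require Import zify ring lra.
Set Implicit Arguments.
Unset Strict Implicit.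
Unset Printing Implicit Defensive.
Import Order.TTheory GRing.Theory Num.Theory.
Local Open Scope ring_scope.

(* Let f = g h with g and h nonconstant. The coefficient a_j dominates f on
   the annulus alpha <= |z| <= beta, which therefore contains no complex root
   of f; as [n - d, n + d] lies inside [alpha, beta], every root z of f
   satisfies |n - z| > d, so |g(n)| > d and |h(n)| > d. Since
   |g(n) h(n)| = p^k d with p not dividing d, the prime p divides both g(n) and
   h(n). But f(X + n) = g(X + n) h(X + n) has coefficients f^(i)(n)/i!, whose
   p-adic Newton polygon starts with the segment from (0, k) to (l, 0); as
   gcd(k, l) = 1 this segment has no interior lattice point and cannot be split
   between the two factors, so one of g(n), h(n) is prime to p (Dumas). *)

Lemma coef_comp_XaddC (R : comNzRingType) (q : {poly R}) (c : R) i :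
  (q \Po ('X + c%:P))`_i = (q^`N(i)).[c].
Proof.
have -> : q \Po ('X + c%:P) = \poly_(i < size q) (q^`N(i)).[c].
  rewrite /comp_poly addrC nderiv_taylor; last exact: mulrC.
  rewrite poly_def size_map_polyC; apply: eq_bigr => j _.
  by rewrite nderivn_map horner_map /= mul_polyC.
by rewrite coef_poly; case: ltnP => // le_qi; rewrite nderivn_poly0 ?horner0.
Qed.

Section WeightedValuation.
Variables (p k l : nat).
Hypothesis p_pr : prime p.

Definition vp (x : int) : nat := logn p `|x|.
(* l times the valuation of x X^i, for the extension of v_p with v(X) = k/l. *)
Definition weight (i : nat) (x : int) : nat := l * vp x + k * i.

Definition last_min_weight (q : {poly int}) (b : nat) : Prop :=
  [/\ q`_b != 0,
      forall i, q`_i != 0 -> (weight b q`_b <= weight i q`_i)%N &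
      forall i, (b < i)%N -> q`_i != 0 -> (weight b q`_b < weight i q`_i)%N].

Lemma vpM x y : x != 0 -> y != 0 -> vp (x * y) = (vp x + vp y)%N.
Proof. by move=> x0 y0; rewrite /vp abszM lognM // absz_gt0. Qed.

Lemma dvdz_vp e x : x != 0 -> ((p ^ e)%:Z %| x)%Z = (e <= vp x)%N.
Proof. by move=> x0; rewrite dvdzE /= pfactor_dvdn // absz_gt0. Qed.

Lemma vp_sum_ge (I : Type) (r : seq I) (P : pred I) (t : I -> int) e :
  (forall i, P i -> t i != 0 -> (e <= vp (t i))%N) ->
  \sum_(i <- r | P i) t i != 0 -> (e <= vp (\sum_(i <- r | P i) t i))%N.
Proof.
move=> t_ge s0; rewrite -dvdz_vp //; apply: rpred_sum => i Pi.
by have [->|ti0] := eqVneq (t i) 0; [exact: rpred0 | rewrite dvdz_vp // t_ge].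
Qed.

Lemma vpD x y : x != 0 -> ((p ^ (vp x).+1)%:Z %| y)%Z ->
  x + y != 0 /\ vp (x + y) = vp x.
Proof.
move=> x0 dvd_y.
have ndvd : ~~ ((p ^ (vp x).+1)%:Z %| x + y)%Z by rewrite rpredDr // dvdz_vp // ltnn.
have xy0 : x + y != 0 by apply: contraNneq ndvd => ->; rewrite dvdz0.
split=> //; apply/eqP; rewrite eqn_leq leqNgt -dvdz_vp // ndvd -dvdz_vp //.
rewrite rpredD //; first by rewrite dvdz_vp.
apply: (dvdz_trans _ dvd_y).
by rewrite dvdzE /= dvdn_exp2l.
Qed.

Lemma exists_last_min_weight q : q != 0 -> exists b, last_min_weight q b.
Proof.
move=> q0.
have lt_size i : q`_i != 0 -> (i < size q)%N.
  by rewrite ltnNge; apply: contra => /(nth_default 0) ->.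
pose attained w := [exists i : 'I_(size q), (q`_i != 0) && (weight i q`_i == w)].
have attainedP i : q`_i != 0 -> attained (weight i q`_i).
  by move=> qi; apply/existsP; exists (Ordinal (lt_size i qi)); rewrite /= qi eqxx.
have lead0 : q`_(size q).-1 != 0 by rewrite -lead_coefE lead_coef_eq0.
case: (ex_minnP (ex_intro attained _ (attainedP _ lead0))) => w.
case/existsP=> i0 /andP[qi0 /eqP wi0] w_min.
pose argmin i := (q`_i != 0) && (weight i q`_i == w).
have argmin_i0 : argmin i0 by rewrite /argmin qi0 wi0 eqxx.
have argmin_le i : argmin i -> (i <= size q)%N by case/andP=> /lt_size /ltnW.
case: (ex_maxnP (ex_intro argmin _ argmin_i0) argmin_le) => b /andP[qb /eqP wb] b_max.
exists b; split=> // [i qi | i lt_bi qi]; rewrite wb; first exact: w_min (attainedP _ qi).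
rewrite ltn_neqAle w_min ?attainedP // andbT; apply: contraTneq lt_bi => wi.
by rewrite -leqNgt; apply: b_max; rewrite /argmin qi -wi eqxx.
Qed.

Lemma weight_coefM_ge (G H : {poly int}) M c (P : pred 'I_M.+1) :
  (forall i : 'I_M.+1, P i -> G`_i != 0 -> H`_(M - i) != 0 ->
     (c <= weight i G`_i + weight (M - i) H`_(M - i))%N) ->
  \sum_(i < M.+1 | P i) G`_i * H`_(M - i) != 0 ->
  (c <= l * vp (\sum_(i < M.+1 | P i) G`_i * H`_(M - i)) + k * M)%N.
Proof.
set s := \sum_(i < _ | _) _ => c_le s0; rewrite leqNgt; apply/negP => lt_s.
suff : ((vp s).+1 <= vp s)%N by rewrite ltnn.
apply: vp_sum_ge => // i Pi; rewrite mulf_eq0 negb_or => /andP[Gi Hi].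
have := c_le i Pi Gi Hi; rewrite vpM // /weight.
have : (i + (M - i) = M)%N by rewrite subnKC // -ltnS.
nia.
Qed.

(* Gauss's lemma for the weighted valuation, keeping track of the last index
   where the minimum is attained. *)
Lemma last_min_weightM {G H : {poly int}} {bG bH : nat} :
  last_min_weight G bG -> last_min_weight H bH ->
  last_min_weight (G * H) (bG + bH) /\
  weight (bG + bH) (G * H)`_(bG + bH) = (weight bG G`_bG + weight bH H`_bH)%N.
Proof.
move=> [G0 G_min G_last] [H0 H_min H_last].
set N := (bG + bH)%N; set w := (weight bG G`_bG + weight bH H`_bH)%N.
have term_ge M (i : 'I_M.+1) : G`_i != 0 -> H`_(M - i) != 0 ->
    (w <= weight i G`_i + weight (M - i) H`_(M - i))%N.
  by move=> Gi Hi; rewrite leq_add ?G_min ?H_min.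
have term_gt M (i : 'I_M.+1) : (bG < i)%N || (bH < M - i)%N ->
    G`_i != 0 -> H`_(M - i) != 0 -> (w < weight i G`_i + weight (M - i) H`_(M - i))%N.
  move=> /orP[/G_last lt_i | /H_last lt_i] Gi Hi.
    by rewrite -addSn leq_add ?lt_i ?H_min.
  by rewrite -addnS leq_add ?lt_i ?G_min.
have coef_ge M c (P : pred 'I_M.+1) :
    (forall i : 'I_M.+1, P i -> G`_i != 0 -> H`_(M - i) != 0 ->
       (c <= weight i G`_i + weight (M - i) H`_(M - i))%N) ->
    (G * H)`_M = \sum_(i < M.+1 | P i) G`_i * H`_(M - i) ->
    (G * H)`_M != 0 -> (c <= weight M (G * H)`_M)%N.
  by move=> c_le eM; rewrite /weight eM; apply: weight_coefM_ge.
have lt_bG : (bG < N.+1)%N by rewrite ltnS leq_addr.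
have [FN0 vFN] : (G * H)`_N != 0 /\ vp (G * H)`_N = vp (G`_bG * H`_bH).
  rewrite coefM (bigD1 (Ordinal lt_bG)) //= /N addKn; apply: vpD; first exact: mulf_neq0.
  set r := \sum_(i < _ | _) _; have [->|r0] := eqVneq r 0; first exact: dvdz0.
  have r_gt : (w < l * vp r + k * N)%N.
    apply: weight_coefM_ge r0 => i ne_ibG; apply: term_gt; apply/orP.
    have {}ne_ibG : (i : nat) != bG by apply: contraNneq ne_ibG => eq_i; apply/eqP/val_inj.
    by case: (ltnP bG i) => ?; [left | right; lia].
  rewrite dvdz_vp // vpM //; move: r_gt.
  by rewrite /w /weight /N addnACA -!mulnDr ltn_add2r ltn_mul2l => /andP[].
have wFN : weight N (G * H)`_N = w by rewrite /weight vFN vpM // /w /weight /N; ring.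
split=> //; split=> //; rewrite wFN => M.
  by apply: coef_ge (fun i _ => term_ge M i) (coefM _ _ _).
move=> lt_NM; apply: coef_ge (coefM _ _ _) => i _; apply: term_gt.
by apply/orP; case: (ltnP bG i) => ?; [left | right; lia].
Qed.

(* The Newton polygon of F begins with the segment from (0, k) to (l, 0). *)
Lemma dumas_const_coprime (F G H : {poly int}) :
  (0 < l)%N -> coprime k l -> F = G * H -> F`_0 != 0 -> vp F`_0 = k ->
  (forall i, (i < l)%N -> ((p ^ k)%:Z %| F`_i)%Z) -> ~~ (p%:Z %| F`_l)%Z ->
  vp G`_0 = 0%N \/ vp H`_0 = 0%N.
Proof.
move=> l_gt0 co_kl FGH F00 vF0 dvd_F ndvd_Fl.
have [G00 H00] : G`_0 != 0 /\ H`_0 != 0.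
  by apply/andP; rewrite -negb_or -mulf_eq0 -coef0M -FGH.
have st : (vp G`_0 + vp H`_0 = k)%N by rewrite -vpM // -coef0M -FGH.
case: (posnP (vp G`_0)) => [|s_gt0]; first by left.
case: (posnP (vp H`_0)) => [|t_gt0]; first by right.
exfalso.
have Fl0 : F`_l != 0 by apply: contraNneq ndvd_Fl => ->; rewrite dvdz0.
have vFl : vp F`_l = 0%N.
  by apply: logn_coprime; rewrite prime_coprime // -dvdzE.
have [bG G_last] : exists bG, last_min_weight G bG.
  by apply: exists_last_min_weight; apply: contraNneq G00 => ->; rewrite coef0.
have [bH H_last] : exists bH, last_min_weight H bH.
  by apply: exists_last_min_weight; apply: contraNneq H00 => ->; rewrite coef0.
have wG : (weight bG G`_bG <= l * vp G`_0)%N.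
  by case: G_last => _ /(_ 0%N G00) + _; rewrite /weight muln0 addn0.
have wH : (weight bH H`_bH <= l * vp H`_0)%N.
  by case: H_last => _ /(_ 0%N H00) + _; rewrite /weight muln0 addn0.
have [[FN0 _ F_last] wFN] := last_min_weightM G_last H_last.
rewrite -FGH in FN0 F_last wFN.
set N := (bG + bH)%N in FN0 F_last wFN.
move: wFN wG wH; rewrite /weight => wFN wG wH.
have le_lN : (l <= N)%N.
  rewrite leqNgt; apply/negP => lt_Nl.
  have vFN : (k <= vp F`_N)%N by rewrite -dvdz_vp // dvd_F.
  have := F_last l lt_Nl Fl0; rewrite /weight vFl.
  nia.
have le_Nl : (N <= l)%N by nia.
(* Both weight bounds are now tight, so k bG = l v(G_0) with 0 < v(G_0) < k. *)
have kbG : (k * bG = l * vp G`_0)%N by rewrite /N in le_lN le_Nl wFN; nia.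
have : (k %| vp G`_0)%N by rewrite -(Gauss_dvdr _ co_kl) -kbG dvdn_mulr.
by move/(dvdn_leq s_gt0); lia.
Qed.
End WeightedValuation.

Lemma taylor_dumas (p k l : nat) (f g h : {poly int}) (n : int) :
  prime p -> (0 < l)%N -> coprime k l -> f = g * h -> f.[n] != 0 -> vp p f.[n] = k ->
  (forall i, (i < l)%N -> ((p ^ k)%:Z %| (f^`N(i)).[n])%Z) ->
  ~~ (p%:Z %| (f^`N(l)).[n])%Z ->
  vp p g.[n] = 0%N \/ vp p h.[n] = 0%N.
Proof.
move=> p_pr l_gt0 co_kl fgh fn0 vfn dvd_f ndvd_f.
pose shift q := q \Po ('X + n%:P).
have coef_shift q i : (shift q)`_i = (q^`N(i)).[n] := coef_comp_XaddC q n i.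
have := @dumas_const_coprime p k l p_pr (shift f) (shift g) (shift h) l_gt0 co_kl.
rewrite !coef_shift !nderivn0; apply=> //; first by rewrite /shift fgh comp_polyM.
by move=> i /dvd_f; rewrite coef_shift.
Qed.

(* The hypothesis of the theorem for radii A < B, multiplied by A^(m-j). *)
Definition dominant (F : numDomainType) (f : {poly int}) (j : nat) (A B : F) : bool :=
  B ^+ ((size f).-1 - j) *
    \sum_(i < (size f).-1.+1 | i != j :> nat) `|f`_i|%:~R * A ^+ i
  < `|f`_j|%:~R * A ^+ (size f).-1.

Lemma dominant_ratioE (F : numFieldType) (f : {poly int}) j (a b : F) :
  0 < a -> (j <= (size f).-1)%N ->
  dominant f j a b =
  ((b / a) ^+ ((size f).-1 - j) *
     \sum_(i < (size f).-1.+1 | i != j :> nat) `|f`_i|%:~R * a ^+ i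
   < `|f`_j|%:~R * a ^+ j).
Proof.
move=> a_gt0 jm; rewrite -(ltr_pM2l (exprn_gt0 ((size f).-1 - j) a_gt0)).
by rewrite mulrA -exprMn mulrCA divff ?gt_eqF // mulr1 mulrCA -exprD subnK.
Qed.

Lemma dominantW (F : numDomainType) (f : {poly int}) j (a b A B : F) :
  (j <= (size f).-1)%N -> 0 < a -> a <= A -> 0 <= B -> B <= b ->
  dominant f j a b -> dominant f j A B.
Proof.
rewrite /dominant; set m := (size f).-1 => jm a_gt0 aA B_ge0 Bb dom_ab.
have A_gt0 : 0 < A := lt_le_trans a_gt0 aA.
have scale i : (i <= m)%N ->
    B ^+ (m - j) * (A ^+ i * a ^+ m) <= b ^+ (m - j) * (a ^+ i * A ^+ m).
  move=> im; rewrite -[in A ^+ m](subnKC im) -[in a ^+ m](subnKC im) !exprD.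
  have -> : B ^+ (m - j) * (A ^+ i * (a ^+ i * a ^+ (m - i))) =
            A ^+ i * a ^+ i * (B ^+ (m - j) * a ^+ (m - i)) by ring.
  have -> : b ^+ (m - j) * (a ^+ i * (A ^+ i * A ^+ (m - i))) =
            A ^+ i * a ^+ i * (b ^+ (m - j) * A ^+ (m - i)) by ring.
  rewrite ler_wpM2l ?mulr_ge0 ?exprn_ge0 ?(ltW A_gt0) ?(ltW a_gt0) //.
  by rewrite ler_pM ?exprn_ge0 ?lerXn2r ?nnegrE ?(ltW a_gt0) ?(ltW A_gt0) ?(le_trans B_ge0 Bb).
have am_gt0 : 0 < a ^+ m := exprn_gt0 m a_gt0.
rewrite -(ltr_pM2r am_gt0); apply: le_lt_trans (_ : _ <= b ^+ (m - j) *
    (\sum_(i < m.+1 | i != j :> nat) `|f`_i|%:~R * a ^+ i) * A ^+ m) _; last first.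
  by rewrite [ltRHS]mulrAC ltr_pM2r ?exprn_gt0.
rewrite !big_distrr !big_distrl /=; apply: ler_sum => i _.
rewrite -!mulrA !(mulrCA _ `|f`_i|%:~R) ler_wpM2l ?ler0z //.
by apply: scale; rewrite -ltnS.
Qed.

Lemma dominant_int (F : numDomainType) (f : {poly int}) j (A B : int) :
  dominant f j (A%:~R : F) B%:~R = dominant f j A B.
Proof.
rewrite /dominant -(ltr_int F) !rmorphM !rmorphXn rmorph_sum /=.
congr (_ * _ < _ * _); last by rewrite intz.
by under [RHS]eq_bigr do rewrite rmorphM rmorphXn /= intz.
Qed.

Lemma size_map_intr (F : numDomainType) (f : {poly int}) :
  size (map_poly (intr : int -> F) f) = size f.
Proof. exact: size_map_inj_poly (@intr_inj F) (rmorph0 _) f. Qed.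

Lemma dominant_no_root (F : numDomainType) (f : {poly int}) j (A B t : F) :
  (j <= (size f).-1)%N -> 0 < A -> dominant f j A B -> A <= `|t| -> `|t| <= B ->
  ~~ root (map_poly intr f) t.
Proof.
set m := (size f).-1 => jm A_gt0 dom At tB.
have t_gt0 : 0 < `|t| := lt_le_trans A_gt0 At.
have := dominantW jm A_gt0 At (normr_ge0 t) tB dom; rewrite /dominant -/m.
rewrite -[in `|t| ^+ m](subnK jm) exprD mulrCA ltr_pM2l ?exprn_gt0 // => dom_t.
apply/negP; rewrite /root (@horner_coef_wide _ m.+1) ?size_map_intr ?leqSpred //.
rewrite (bigD1 (Ordinal (n := m.+1) jm)) //= addr_eq0 => /eqP fj.
have : `|f`_j|%:~R * `|t| ^+ j <= \sum_(i < m.+1 | i != j :> nat) `|f`_i|%:~R * `|t| ^+ i.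
  rewrite intr_norm -normrX -normrM -coef_map fj normrN.
  apply: le_trans (ler_norm_sum _ _ _) _; apply: ler_sum => i _.
  by rewrite normrM normrX coef_map intr_norm.
by move/(lt_le_trans dom_t); rewrite ltxx.
Qed.

Lemma roots_far_norm_horner_gt (C : numClosedFieldType) (g : {poly C}) (x d : C) :
  1 <= d -> 1 <= `|lead_coef g| -> (1 < size g)%N ->
  (forall z, root g z -> d < `|x - z|) -> d < `|g.[x]|.
Proof.
move=> d_ge1 lc_ge1 size_g far.
have [rs g_eq] := closed_field_poly_normal g.
have lc0 : lead_coef g != 0 by rewrite -normr_gt0 (lt_le_trans ltr01).
case: rs g_eq => [|z rs] g_eq.
  by move: size_g; rewrite g_eq big_nil size_scale // size_poly1.
have root_g y : y \in z :: rs -> root g y.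
  by move=> y_rs; rewrite g_eq rootZ // root_prod_XsubC.
rewrite g_eq hornerZ horner_prod normrM big_cons normrM normr_prod hornerXsubC.
have prod_ge1 : 1 <= \prod_(y <- rs) `|('X - y%:P).[x]|.
  rewrite big_seq; apply: (big_ind (fun c => 1 <= c)) => // [c c'|y y_rs].
    exact: mulr_ege1.
  by rewrite hornerXsubC (le_trans d_ge1) ?ltW ?far ?root_g ?inE ?y_rs ?orbT.
apply: lt_le_trans (far z (root_g z (mem_head _ _))) _.
by rewrite (le_trans (ler_peMr _ prod_ge1)) ?ler_peMl ?mulr_ge0 ?prodr_ge0.
Qed.

Lemma dominant_factor_horner_gt (f g h : {poly int}) j (n d : nat) :
  f = g * h -> (1 < size g)%N -> (j <= (size f).-1)%N -> (0 < d)%N -> (d < n)%N ->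
  dominant f j (n%:Z - d%:Z) (n%:Z + d%:Z) -> (d < `|g.[n%:Z]|)%N.
Proof.
move=> fgh size_g jm d_gt0 lt_dn dom.
have g0 : g != 0 by rewrite -size_poly_gt0 (ltn_trans _ size_g).
rewrite -(ltr_nat algC) natr_absz intr_norm -horner_map /= -pmulrn.
apply: roots_far_norm_horner_gt; rewrite ?ler1n ?size_map_intr //.
  rewrite (lead_coef_map_inj (@intr_inj _) (rmorph0 _)) -intr_norm -natr_absz.
  by rewrite ler1n absz_gt0 lead_coef_eq0.
move=> z gz; have fz : root (map_poly intr f) z by rewrite fgh rmorphM rootM gz.
rewrite -(dominant_int algC) rmorphB rmorphD /= -!pmulrn in dom.
have A_gt0 : 0 < n%:R - d%:R :> algC by rewrite subr_gt0 ltr_nat.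
have no_annulus := dominant_no_root jm A_gt0 dom.
have [lt_zA | le_Az] := boolP (`|z| < n%:R - d%:R).
  by apply: lt_le_trans (lerB_dist _ _); rewrite normr_nat ltrBrDl -ltrBrDr.
have real_nd : n%:R - d%:R \is @Num.real algC by rewrite rpredB ?realn.
rewrite real_ltNge ?normr_real // negbK in le_Az.
have lt_Bz : n%:R + d%:R < `|z|.
  rewrite real_ltNge ?normr_real ?rpredD ?realn //.
  by apply: contraL fz => /(no_annulus z le_Az).
rewrite distrC; apply: lt_le_trans (lerB_dist _ _).
by rewrite normr_nat ltrBrDr addrC.
Qed.

Lemma primitive_factor_nonconstant (f g h : {poly int}) :
  primitive_int f -> f = g * h -> g \isn't a GRing.unit -> (1 < size g)%N.
Proof.
move=> prim fgh; apply: contraR; rewrite -leqNgt => /size1_polyC g_eq.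
move: fgh; rewrite g_eq; move: (g`_0) => c fch.
have : (`|c| %| 1)%N.
  by rewrite -prim; apply/dvdn_biggcdP => -[i lt_i] _ /=; rewrite fch coefCM abszM dvdn_mulr.
rewrite poly_unitE size_polyC coefC /= dvdn1.
by case: c {fch} => [[|[|?]]|[|?]] //=; rewrite ?unitr1 ?unitrN1.
Qed.

Lemma logn_factors_gt0 (p k d x y : nat) :
  prime p -> ~~ (p %| d)%N -> (0 < d)%N -> (x * y = p ^ k * d)%N -> (d < x)%N -> (d < y)%N ->
  [/\ 0 < logn p x, 0 < logn p y & logn p x + logn p y = k]%N.
Proof.
move=> p_pr pNd d_gt0 xy dx dy.
have logn_gt0_of z w : (z * w = p ^ k * d)%N -> (d < z)%N -> (0 < logn p z)%N.
  move=> zw dz; rewrite logn_gt0 mem_primes p_pr (ltn_trans d_gt0 dz) /=.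
  apply: contraLR dz => pNz; rewrite -leqNgt dvdn_leq //.
  have co_zpk : coprime z (p ^ k) by rewrite coprimeXr // coprime_sym prime_coprime.
  by rewrite -(Gauss_dvdr _ co_zpk) -zw dvdn_mulr.
split; [exact: logn_gt0_of xy dx | by apply: (logn_gt0_of y x); rewrite // mulnC |].
have pk_gt0 : (0 < p ^ k)%N by rewrite expn_gt0 prime_gt0.
rewrite -lognM ?(ltn_trans d_gt0) // xy lognM // pfactorK //.
by rewrite logn_coprime ?addn0 // prime_coprime.
Qed.

Theorem theorem3 (R : realFieldType) (f : {poly int}) (alpha beta : R) (j : nat)
  (n d k l p : nat) :
  primitive_int f ->
  0 < alpha -> alpha < beta ->
  (j <= (size f).-1)%N ->
  `|f`_j|%:~R * alpha ^+ j >
    (beta / alpha) ^+ ((size f).-1 - j) *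
      \sum_(i < (size f).-1.+1 | i != j :> nat) `|f`_i|%:~R * alpha ^+ i ->
  (0 < n)%N -> (0 < d)%N -> (0 < k)%N -> (0 < l)%N -> (l <= (size f).-1)%N ->
  prime p -> ~~ (p %| d)%N ->
  beta - d%:R >= n%:R -> n%:R >= alpha + d%:R ->
  (f.[n%:Z] = (p ^ k * d)%:Z \/ f.[n%:Z] = - (p ^ k * d)%:Z) ->
  coprime k l ->
  (forall i : nat, (i < l)%N -> ((p ^ k)%:Z %| (f^`N(i)).[n%:Z])%Z) ->
  ((1 < k)%N -> ~~ ((p%:Z %| (f^`N(l)).[n%:Z])%Z)) ->
  irreducible_Zpoly f.
Proof.
move=> prim a_gt0 ab jm dom_ab _ d_gt0 _ l_gt0 lm p_pr pNd bn na fn co_kl dvd_f ndvd_f.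
have lt_dn : (d < n)%N by rewrite -(ltr_nat R); lra.
have dom : dominant f j (n%:Z - d%:Z) (n%:Z + d%:Z).
  rewrite -(dominant_int R) rmorphB rmorphD /= -!pmulrn.
  have n_ge0 := ler0n R n; have d_ge0 := ler0n R d.
  by apply: (dominantW jm a_gt0 _ _ _ (_ : dominant f j alpha beta));
    rewrite ?dominant_ratioE //; lra.
split=> [||g h fgh].
- by apply/eqP => f0; move: prim; rewrite /primitive_int f0 size_poly0 big_ord0.
- by rewrite poly_unitE gtn_eqF // -ltn_predRL (leq_trans l_gt0 lm).
have [gU|gN] := boolP (g \is a GRing.unit); first by left.
have [hU|hN] := boolP (h \is a GRing.unit); first by right.
exfalso; have fhg : f = h * g by rewrite mulrC.
have gn_gt := dominant_factor_horner_gt fgh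
  (primitive_factor_nonconstant prim fgh gN) jm d_gt0 lt_dn dom.
have hn_gt := dominant_factor_horner_gt fhg
  (primitive_factor_nonconstant prim fhg hN) jm d_gt0 lt_dn dom.
have xy : (`|g.[n%:Z]| * `|h.[n%:Z]| = p ^ k * d)%N.
  by rewrite -abszM -hornerM -fgh; case: fn => ->; rewrite ?abszN.
have [s_gt0 t_gt0 st] := logn_factors_gt0 p_pr pNd d_gt0 xy gn_gt hn_gt.
have k_gt1 : (1 < k)%N by rewrite -st (leq_add s_gt0 t_gt0).
have : vp p g.[n%:Z] = 0%N \/ vp p h.[n%:Z] = 0%N.
  apply: (taylor_dumas p_pr l_gt0 co_kl fgh _ _ dvd_f (ndvd_f k_gt1)).
    by rewrite fgh hornerM mulf_neq0 // -absz_gt0 (ltn_trans d_gt0).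
  by rewrite /vp fgh hornerM abszM lognM // (ltn_trans d_gt0).
by rewrite /vp => -[] vp0; [move: s_gt0 | move: t_gt0]; rewrite vp0.
Qed.
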